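(* Let $X$ be a topological space having a well-orderable topological basis (for instance a countable basis). Then $X$ is an approximation space (respectively a convergent approximation space) if and only if player Nonempty has a stationary winning strategy (respectively a stationary convergent winning strategy) in the Choquet game $\mathit{Ch}(X)$.
   Context: Approximation relation: a binary relation $\ll$ on a topological basis $\mathcal{B}$ of $X$ such that for all $U,V,T\in\mathcal{B}$: (1) $U\ll V\Rightarrow V\subseteq U$; (2) $U\subseteq T$ and $U\ll V$ imply $T\ll V$; (3) for every $x\in U$ there is $W\in\mathcal{B}$ with $x\in W$ and $U\ll W$; (4) every sequence $(U_i)_{i\in\mathbb{N}}$ in $\mathcal{B}$ with $U_i\ll U_{i+1}$ for all $i$ has $\bigcap_i U_i\neq\emptyset$. Convergent: (4) strengthened to: every such sequence is a neighborhood basis of some point $x\in\bigcap_iU_i$. (Convergent) approximation space: a space admitting such a relation. Choquet game $\mathit{Ch}(X)$: players Empty and Nonempty alternate for $\omega$ rounds; in round $i$ Empty chooses a pair $(x_i,U_i)$ with $U_i$ open, $x_i\in U_i$, and $U_i\subseteq V_{i-1}$ for $i\ge1$; Nonempty answers with an open $V_i$ with $x_i\in V_i\subseteq U_i$. Nonempty wins iff $\bigcap_i V_i\neq\emptyset$. A winning strategy for Nonempty is stationary if the move depends only on the last move $(x_i,U_i)$ of Empty; it is convergent if in every play following it the sets $V_i$ form a neighborhood basis of some point of $\bigcap_iV_i$. *)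

From Stdlib Require Import Classical.

Set Implicit Arguments.

Definition subset {X : Type} (A B : X -> Prop) : Prop := forall x, A x -> B x.

Record topology (X : Type) : Type := Topology {
  is_open : (X -> Prop) -> Prop;
  open_full : is_open (fun _ => True);
  open_inter : forall U V, is_open U -> is_open V ->
                 is_open (fun x => U x /\ V x);
  open_union : forall F : (X -> Prop) -> Prop,
                 (forall U, F U -> is_open U) ->
                 is_open (fun x => exists U, F U /\ U x)
}.

Definition is_basis {X : Type} (T : topology X) (B : (X -> Prop) -> Prop) : Prop :=
  (forall U, B U -> is_open T U) /\
  (forall W x, is_open T W -> W x -> exists U, B U /\ U x /\ subset U W).

Definition well_orderable {X : Type} (B : (X -> Prop) -> Prop) : Prop :=
  exists R : (X -> Prop) -> (X -> Prop) -> Prop,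
    (forall U, B U -> ~ R U U) /\
    (forall U V W, B U -> B V -> B W -> R U V -> R V W -> R U W) /\
    (forall U V, B U -> B V -> R U V \/ U = V \/ R V U) /\
    (forall P : (X -> Prop) -> Prop, (exists U, B U /\ P U) ->
       exists U, B U /\ P U /\ forall V, B V -> P V -> ~ R V U).

Definition nbhd_basis_at {X : Type} (T : topology X) (V : nat -> X -> Prop) (y : X) : Prop :=
  forall W, is_open T W -> W y -> exists i, subset (V i) W.

(* Axioms (1)-(3) of an approximation relation on the basis B. *)
Definition approx_rel_base {X : Type} (T : topology X) (B : (X -> Prop) -> Prop)
    (ll : (X -> Prop) -> (X -> Prop) -> Prop) : Prop :=
  is_basis T B /\
  (forall U V, B U -> B V -> ll U V -> subset V U) /\
  (forall U V T', B U -> B V -> B T' -> subset U T' -> ll U V -> ll T' V) /\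
  (forall U x, B U -> U x -> exists W, B W /\ W x /\ ll U W).

Definition approx_rel {X : Type} (T : topology X) (B : (X -> Prop) -> Prop)
    (ll : (X -> Prop) -> (X -> Prop) -> Prop) : Prop :=
  approx_rel_base T B ll /\
  (forall Us : nat -> X -> Prop, (forall i, B (Us i)) ->
     (forall i, ll (Us i) (Us (S i))) -> exists x, forall i, Us i x).

Definition conv_approx_rel {X : Type} (T : topology X) (B : (X -> Prop) -> Prop)
    (ll : (X -> Prop) -> (X -> Prop) -> Prop) : Prop :=
  approx_rel_base T B ll /\
  (forall Us : nat -> X -> Prop, (forall i, B (Us i)) ->
     (forall i, ll (Us i) (Us (S i))) ->
     exists x, (forall i, Us i x) /\ nbhd_basis_at T Us x).

Definition approximation_space {X : Type} (T : topology X) : Prop :=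
  exists B ll, approx_rel T B ll.

Definition convergent_approximation_space {X : Type} (T : topology X) : Prop :=
  exists B ll, conv_approx_rel T B ll.

(* Choquet game Ch(X).  A stationary strategy for Nonempty answers Empty's
   last move (x, U) with sigma x U; it must be a legal move. *)
Definition stationary_strategy {X : Type} (T : topology X)
    (sigma : X -> (X -> Prop) -> (X -> Prop)) : Prop :=
  forall x U, is_open T U -> U x ->
    is_open T (sigma x U) /\ sigma x U x /\ subset (sigma x U) U.

(* A play following sigma: Empty's moves (xs i, Us i) are legal, and
   Nonempty answers V_i = sigma (xs i) (Us i). *)
Definition play_following {X : Type} (T : topology X)
    (sigma : X -> (X -> Prop) -> (X -> Prop))
    (xs : nat -> X) (Us : nat -> X -> Prop) : Prop :=
  (forall i, is_open T (Us i) /\ Us i (xs i)) /\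
  (forall i, subset (Us (S i)) (sigma (xs i) (Us i))).

Definition stationary_winning {X : Type} (T : topology X)
    (sigma : X -> (X -> Prop) -> (X -> Prop)) : Prop :=
  stationary_strategy T sigma /\
  forall xs Us, play_following T sigma xs Us ->
    exists y, forall i, sigma (xs i) (Us i) y.

Definition stationary_convergent_winning {X : Type} (T : topology X)
    (sigma : X -> (X -> Prop) -> (X -> Prop)) : Prop :=
  stationary_strategy T sigma /\
  forall xs Us, play_following T sigma xs Us ->
    exists y, (forall i, sigma (xs i) (Us i) y) /\
              nbhd_basis_at T (fun i => sigma (xs i) (Us i)) y.

From Stdlib Require Import Classical IndefiniteDescription.

Set Implicit Arguments.

(* (=>) Given an approximation relation << on a basis B, Nonempty answers a
   move (x, U) by a basic W containing x such that W0 << W for some basic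
   W0 included in U.  Since Empty's next set lies inside W,
   axiom (2) turns W0 << W' into W << W', so Nonempty's answers form a
   <<-chain in B, and axiom (4) (or its convergent form) makes her win.

   (<=) Given a stationary strategy sigma, declare U << V when some legal
   move (x, U') with U' included in U has sigma x U' containing V.  This is
   an approximation relation on any basis; a <<-chain is interleaved with
   the answers of a play following sigma, so both share the same
   intersection and the same neighbourhood behaviour.

   The choices of witnesses use the axiom of choice (functional_choice);
   the well-orderability of a basis is then only needed to have a basis. *)

Section ChoquetApproximation.
Variables (X : Type) (T : topology X).

Lemma legal_move_choice (P : X -> (X -> Prop) -> (X -> Prop) -> Prop) :
  (forall x U, is_open T U -> U x -> exists W, P x U W) ->
  exists sigma, forall x U, is_open T U -> U x -> P x U (sigma x U).
Proof.
  intros Hex.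
  destruct (functional_choice
              (fun (m : X * (X -> Prop)) W =>
                 is_open T (snd m) -> snd m (fst m) -> P (fst m) (snd m) W))
    as [f Hf].
  - intros [x U]; simpl.
    destruct (classic (is_open T U /\ U x)) as [[HU Hx] | Hn].
    + destruct (Hex x U HU Hx) as [W HW]. exists W; auto.
    + exists U. intros HU Hx. exfalso. auto.
  - exists (fun x U => f (x, U)). intros x U HU Hx. exact (Hf (x, U) HU Hx).
Qed.

Definition approx_answer (B : (X -> Prop) -> Prop)
    (ll : (X -> Prop) -> (X -> Prop) -> Prop) (x : X) (U W : X -> Prop) : Prop :=
  B W /\ W x /\ subset W U /\ exists W0, B W0 /\ subset W0 U /\ ll W0 W.

Lemma approx_answer_exists B ll : approx_rel_base T B ll ->
  forall x U, is_open T U -> U x -> exists W, approx_answer B ll x U W.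
Proof.
  intros [[_ Hbasis] [Hsub [_ Happrox]]] x U HU Hx.
  destruct (Hbasis U x HU Hx) as [W0 [BW0 [W0x W0U]]].
  destruct (Happrox W0 x BW0 W0x) as [W [BW [Wx Hll]]].
  exists W. repeat split; auto.
  - intros y Wy. apply W0U, (Hsub W0 W BW0 BW Hll y Wy).
  - exists W0. auto.
Qed.

Lemma approx_strategy B ll : approx_rel_base T B ll ->
  exists sigma, stationary_strategy T sigma /\
    forall xs Us, play_following T sigma xs Us ->
      (forall i, B (sigma (xs i) (Us i))) /\
      (forall i, ll (sigma (xs i) (Us i)) (sigma (xs (S i)) (Us (S i)))).
Proof.
  intros Hll.
  destruct (legal_move_choice (approx_answer B ll) (approx_answer_exists Hll))
    as [sigma Hsigma].
  destruct Hll as [[Bopen _] [_ [Hmono _]]].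
  exists sigma. split.
  - intros x U HU Hx.
    destruct (Hsigma x U HU Hx) as [BW [Wx [WU _]]]. auto.
  - intros xs Us [Hlegal Hnext].
    assert (Hbasic : forall i, B (sigma (xs i) (Us i))).
    { intro i. destruct (Hlegal i) as [HU Hx]. apply (Hsigma _ _ HU Hx). }
    split; [exact Hbasic |].
    intro i. destruct (Hlegal (S i)) as [HU Hx].
    destruct (Hsigma _ _ HU Hx) as [BW [_ [_ [W0 [BW0 [W0U Hll0]]]]]].
    (* W0 lies in Empty's next set, hence in Nonempty's previous answer. *)
    apply (Hmono W0); auto.
    intros y Hy. apply Hnext, W0U, Hy.
Qed.

Definition strategy_rel (sigma : X -> (X -> Prop) -> (X -> Prop))
    (U V : X -> Prop) : Prop :=
  exists x U', is_open T U' /\ U' x /\ subset U' U /\ subset V (sigma x U').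

Lemma strategy_rel_base B sigma : is_basis T B -> stationary_strategy T sigma ->
  approx_rel_base T B (strategy_rel sigma).
Proof.
  intros [Bopen Bbasis] Hs. split; [split; auto |]. split; [| split].
  - intros U V _ _ [x [U' [HU' [Hx [U'U VS]]]]] y Vy.
    destruct (Hs x U' HU' Hx) as [_ [_ SU']]. apply U'U, SU', VS, Vy.
  - intros U V T' _ _ _ UT' [x [U' [HU' [Hx [U'U VS]]]]].
    exists x, U'. repeat split; auto.
    intros y Hy. apply UT', U'U, Hy.
  - intros U x BU Ux.
    destruct (Hs x U (Bopen U BU) Ux) as [So [Sx _]].
    destruct (Bbasis _ x So Sx) as [W [BW [Wx WS]]].
    exists W. repeat split; auto. exists x, U. repeat split; auto.
    intros y Hy. exact Hy.
Qed.

Lemma strategy_chain_play sigma : stationary_strategy T sigma ->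
  forall Us : nat -> X -> Prop, (forall i, strategy_rel sigma (Us i) (Us (S i))) ->
  exists xs Us', play_following T sigma xs Us' /\
    forall i, subset (Us (S i)) (sigma (xs i) (Us' i)) /\
              subset (sigma (xs i) (Us' i)) (Us i).
Proof.
  intros Hs Us Hchain.
  destruct (functional_choice
              (fun i (m : X * (X -> Prop)) =>
                 is_open T (snd m) /\ snd m (fst m) /\ subset (snd m) (Us i) /\
                 subset (Us (S i)) (sigma (fst m) (snd m)))) as [f Hf].
  { intro i. destruct (Hchain i) as [x [U' H]]. exists (x, U'). exact H. }
  exists (fun i => fst (f i)), (fun i => snd (f i)).
  split; [split |].
  - intro i. destruct (Hf i) as [HU [Hx _]]. auto.
  - intros i y Hy. destruct (Hf (S i)) as [_ [_ [U'U _]]].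
    destruct (Hf i) as [_ [_ [_ US]]]. apply US, U'U, Hy.
  - intro i. destruct (Hf i) as [HU [Hx [U'U US]]]. split; auto.
    destruct (Hs _ _ HU Hx) as [_ [_ SU']]. intros y Hy. apply U'U, SU', Hy.
Qed.

Lemma interleaved_nbhd_basis (Us Vs : nat -> X -> Prop) (y : X) :
  (forall i, subset (Us (S i)) (Vs i)) ->
  nbhd_basis_at T Vs y -> nbhd_basis_at T Us y.
Proof.
  intros Hsub Hnb W HW Wy. destruct (Hnb W HW Wy) as [i Hi].
  exists (S i). intros z Hz. apply Hi, Hsub, Hz.
Qed.

Lemma approx_space_winning :
  approximation_space T -> exists sigma, stationary_winning T sigma.
Proof.
  intros [B [ll [Hll Hchain]]].
  destruct (approx_strategy Hll) as [sigma [Hs Hplay]].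
  exists sigma. split; [exact Hs |].
  intros xs Us Hp. destruct (Hplay xs Us Hp) as [Hb Hc]. exact (Hchain _ Hb Hc).
Qed.

Lemma conv_approx_space_winning :
  convergent_approximation_space T ->
  exists sigma, stationary_convergent_winning T sigma.
Proof.
  intros [B [ll [Hll Hchain]]].
  destruct (approx_strategy Hll) as [sigma [Hs Hplay]].
  exists sigma. split; [exact Hs |].
  intros xs Us Hp. destruct (Hplay xs Us Hp) as [Hb Hc]. exact (Hchain _ Hb Hc).
Qed.

Lemma winning_approx_space B sigma : is_basis T B ->
  stationary_winning T sigma -> approximation_space T.
Proof.
  intros HB [Hs Hwin]. exists B, (strategy_rel sigma).
  split; [exact (strategy_rel_base HB Hs) |].
  intros Us _ Hchain.
  destruct (strategy_chain_play Hs Us Hchain) as [xs [Us' [Hp Hsub]]].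
  destruct (Hwin xs Us' Hp) as [y Hy].
  exists y. intro i. apply (proj2 (Hsub i)), Hy.
Qed.

Lemma conv_winning_approx_space B sigma : is_basis T B ->
  stationary_convergent_winning T sigma -> convergent_approximation_space T.
Proof.
  intros HB [Hs Hwin]. exists B, (strategy_rel sigma).
  split; [exact (strategy_rel_base HB Hs) |].
  intros Us _ Hchain.
  destruct (strategy_chain_play Hs Us Hchain) as [xs [Us' [Hp Hsub]]].
  destruct (Hwin xs Us' Hp) as [y [Hy Hnb]].
  exists y. split.
  - intro i. apply (proj2 (Hsub i)), Hy.
  - apply (interleaved_nbhd_basis _ (fun i => proj1 (Hsub i)) Hnb).
Qed.

End ChoquetApproximation.

Theorem theorem3p9 (X : Type) (T : topology X)
  (hB : exists B : (X -> Prop) -> Prop, is_basis T B /\ well_orderable B) :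
  (approximation_space T <->
     exists sigma, stationary_winning T sigma) /\
  (convergent_approximation_space T <->
     exists sigma, stationary_convergent_winning T sigma).
Proof.
  destruct hB as [B [HB _]].
  split; split.
  - apply approx_space_winning.
  - intros [sigma Hwin]. exact (winning_approx_space HB Hwin).
  - apply conv_approx_space_winning.
  - intros [sigma Hwin]. exact (conv_winning_approx_space HB Hwin).
Qed.
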